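(* Let $(X,T)$ be a minimal dendric subshift over a finite alphabet $\mathcal{A}$. Then $(X,T)$ is balanced on letters if and only if it is balanced on factors. In particular, if $(X,T)$ is balanced (on letters, equivalently on factors), then for every factor $v\in\mathcal{L}(X)$ the frequency $\mu_v$ of $v$ is an additive topological eigenvalue of $(X,T)$, and every cylinder $[v]$ is a bounded remainder set.
   Context: $\mathcal{A}$ is a finite alphabet, $T$ is the shift on $\mathcal{A}^{\mathbb{Z}}$, $T((u_n)_n)=(u_{n+1})_n$. A subshift $(X,T)$ is a closed shift-invariant subset $X\subseteq\mathcal{A}^{\mathbb Z}$; it is minimal if it has no nonempty proper closed shift-invariant subset. $\mathcal{L}(X)$ is the set of finite words occurring as factors (blocks of consecutive letters) of elements of $X$, and $\mathcal{L}_n(X)$ those of length $n$. For $w\in\mathcal{L}(X)$ let $L(w)=\{a\in\mathcal{A}: aw\in\mathcal{L}(X)\}$, $R(w)=\{b\in\mathcal{A}: wb\in\mathcal{L}(X)\}$, $E(w)=\{(a,b): awb\in\mathcal{L}(X)\}$; the extension graph $\mathcal{E}(w)$ is the bipartite undirected graph whose vertex set is the disjoint union of $L(w)$ and $R(w)$ and whose edges are the pairs in $E(w)$. A minimal subshift is dendric if $\mathcal{E}(w)$ is a tree for every $w\in\mathcal{L}(X)$ (including the empty word). For finite words $w,v$, $|w|_v$ is the number of occurrences of $v$ as a factor of $w$ and $|w|$ is the length of $w$. $(X,T)$ is balanced on $v\in\mathcal{L}(X)$ if there is a constant $C_v$ such that $||w|_v-|w'|_v|\le C_v$ for all $w,w'\in\mathcal{L}(X)$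 with $|w|=|w'|$; it is balanced on letters if balanced on every letter, and balanced on factors if balanced on every $v\in\mathcal{L}(X)$. The cylinder of $v=v_0\cdots v_{n}$ is $[v]=\{x\in X: x_0\cdots x_n=v\}$. The frequency $\mu_v$ of $v$ is the (uniform) limit of $|w|_v/|w|$ over factors $w$ as $|w|\to\infty$ (equal to $\mu([v])$ for the invariant measure). $\theta\in\mathbb{R}$ is an additive topological eigenvalue if there is a nonzero continuous $f:X\to\mathbb{C}$ with $f(Tx)=e^{2i\pi\theta}f(x)$ for all $x\in X$. The cylinder $[v]$ is a bounded remainder set if $\sup_{x\in X,\,n\ge 0}\big|\#\{0\le i<n: T^ix\in[v]\}-n\mu_v\big|<\infty$. *)

From Stdlib Require Import Reals ZArith.
From Coquelicot Require Import Coquelicot.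
From mathcomp Require Import all_boot.

Set Implicit Arguments.
Unset Strict Implicit.
Unset Printing Implicit Defensive.

Section Subshifts.
Variable A : finType.

Definition config := Z -> A.

Definition shift (x : config) : config := fun n => x (n + 1)%Z.

Definition agree (N : nat) (x y : config) : Prop :=
  forall i : Z, (- Z.of_nat N <= i <= Z.of_nat N)%Z -> x i = y i.

(** closedness in the product topology (A discrete) *)
Definition closed_set (X : config -> Prop) : Prop :=
  forall x, (forall N : nat, exists y, X y /\ agree N x y) -> X x.

Definition shift_invariant (X : config -> Prop) : Prop :=
  forall x, X x <-> X (shift x).

Definition subshift (X : config -> Prop) : Prop :=
  closed_set X /\ shift_invariant X.

Definition minimal_subshift (X : config -> Prop) : Prop :=
  subshift X /\ (exists x, X x) /\
  forall Y : config -> Prop,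
    (forall y, Y y -> X y) -> subshift Y -> (exists y, Y y) ->
    forall x, X x -> Y x.

Definition factor (x : config) (i : Z) (n : nat) : seq A :=
  map (fun k => x (i + Z.of_nat k)%Z) (iota 0 n).

Definition inL (X : config -> Prop) (w : seq A) : Prop :=
  exists x, X x /\ exists i : Z, factor x i (size w) = w.

Definition occ (w v : seq A) : nat :=
  count (fun i => take (size v) (drop i w) == v) (iota 0 (size w - size v).+1).

(** extension graph E(w): vertices are (false, a) for a in L(w) (left copy)
    and (true, b) for b in R(w) (right copy) *)
Definition ext_vertex (X : config -> Prop) (w : seq A) (p : bool * A) : Prop :=
  if p.1 then inL X (rcons w p.2) else inL X (p.2 :: w).

Definition ext_adj (X : config -> Prop) (w : seq A) (p q : bool * A) : Prop :=
  (p.1 = false /\ q.1 = true /\ inL X (p.2 :: rcons w q.2)) \/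
  (p.1 = true /\ q.1 = false /\ inL X (q.2 :: rcons w p.2)).

Definition walk (adj : bool * A -> bool * A -> Prop) (u : bool * A)
  (c : seq (bool * A)) (v : bool * A) : Prop :=
  (forall i, (i < size c)%N -> adj (nth u (u :: c) i) (nth u c i)) /\
  last u c = v.

Definition graph_connected (V : bool * A -> Prop)
  (adj : bool * A -> bool * A -> Prop) : Prop :=
  forall u v, V u -> V v -> exists c, walk adj u c v.

Definition graph_acyclic (V : bool * A -> Prop)
  (adj : bool * A -> bool * A -> Prop) : Prop :=
  ~ exists (d : bool * A) (c : seq (bool * A)),
      (3 <= size c)%N /\ uniq c /\ (forall p, p \in c -> V p) /\
      forall i, (i < size c)%N ->
        adj (nth d c i) (nth d c (i.+1 %% size c)).

Definition is_tree (V : bool * A -> Prop) (adj : bool * A -> bool * A -> Prop)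
  : Prop := graph_connected V adj /\ graph_acyclic V adj.

Definition dendric (X : config -> Prop) : Prop :=
  forall w, inL X w -> is_tree (ext_vertex X w) (ext_adj X w).

Definition balanced_on (X : config -> Prop) (v : seq A) : Prop :=
  exists C : nat, forall w w', inL X w -> inL X w' -> size w = size w' ->
    (occ w v <= occ w' v + C)%N /\ (occ w' v <= occ w v + C)%N.

Definition balanced_on_letters (X : config -> Prop) : Prop :=
  forall a : A, balanced_on X [:: a].

Definition balanced_on_factors (X : config -> Prop) : Prop :=
  forall v, inL X v -> balanced_on X v.

Definition is_frequency (X : config -> Prop) (v : seq A) (mu : R) : Prop :=
  forall eps : R, (0 < eps)%R -> exists N : nat, forall w, inL X w ->
    (N <= size w)%N ->
    (Rabs (INR (occ w v) / INR (size w) - mu) < eps)%R.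

Definition continuous_on_X (X : config -> Prop) (f : config -> C) : Prop :=
  forall x, X x -> forall eps : R, (0 < eps)%R -> exists N : nat,
    forall y, X y -> agree N x y -> (Cmod (Cminus (f y) (f x)) < eps)%R.

Definition e2ipi (theta : R) : C := (cos (2 * PI * theta), sin (2 * PI * theta)).

Definition additive_eigenvalue (X : config -> Prop) (theta : R) : Prop :=
  exists f : config -> C, continuous_on_X X f /\
    (exists x, X x /\ f x <> 0%C) /\
    forall x, X x -> f (shift x) = Cmult (e2ipi theta) (f x).

(** [v] is a bounded remainder set (T^i x in [v] iff x_i ... x_{i+|v|-1} = v) *)
Definition bounded_remainder (X : config -> Prop) (v : seq A) (mu : R) : Prop :=
  exists B : R, forall x, X x -> forall n : nat,
    (Rabs (INR (count (fun i => factor x (Z.of_nat i) (size v) == v) (iota 0 n))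
           - INR n * mu) <= B)%R.
End Subshifts.

(* Balance on a factor [v] says that the Birkhoff sums of the weight [1_v] on
   words of length [|v|] differ by a bounded amount, and such "balanced
   weights" are closed under sums and integer multiples.  If the extension
   graph of [w] is a forest, any function of the extensions [a w b] splits as
   [f a + g b] (potentials on the vertices of a forest), so every weight on
   words of length [m + 2] is a sum of a weight of the prefix and one of the
   suffix of length [m + 1].  By induction from the letters, every weight is
   balanced.

   A balanced weight has Birkhoff sums [n mu + O(1)], which gives the frequency
   [mu] and the bounded remainder property.  The cocycle [H(x, n) = S_n 1_v (x)
   - n mu] is then bounded, and [M x = sup_n H(x, n)] satisfies
   [M (T x) = M x - 1_v(x) + mu].  [M] is lower semicontinuous; the
   oscillation [sup_n H - inf_n H] is lower semicontinuous and shift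
   invariant, hence constant by minimality, which makes [M] also upper
   semicontinuous.  So [x |-> e^{2 i pi M x}] is a continuous eigenfunction
   for [mu]. *)

From Stdlib Require Import Reals ZArith Lia Lra.
From Stdlib Require Import Classical ClassicalEpsilon FunctionalExtensionality.
From Coquelicot Require Import Coquelicot.
From mathcomp Require Import all_boot zify.
(* Imported last, so that [shift] is the shift map and not [Zpower.shift]. *)

Set Implicit Arguments.
Unset Strict Implicit.
Unset Printing Implicit Defensive.
Local Open Scope nat_scope.

Section Factors.
Variable A : finType.
Implicit Types (x y : config A) (u : seq A).

Lemma size_factor x i n : size (factor x i n) = n.
Proof. by rewrite /factor size_map size_iota. Qed.

Lemma eq_factor x y i n :
  (forall k, (i <= k < i + Z.of_nat n)%Z -> x k = y k) -> factor x i n = factor y i n.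
Proof.
move=> exy; apply/eq_in_map => k; rewrite mem_iota add0n => /andP[_ /ltP kn].
apply: exy; lia.
Qed.

Lemma take_factor x i n k : k <= n -> take k (factor x i n) = factor x i k.
Proof.
move=> kn; rewrite /factor -map_take; congr map.
by rewrite -{1}(subnKC kn) iotaD take_size_cat // size_iota.
Qed.

Lemma drop_factor x i n k : drop k (factor x i n) = factor x (i + Z.of_nat k) (n - k).
Proof.
case: (leqP k n) => kn; last first.
  by rewrite drop_oversize ?size_factor 1?ltnW // (eqP (ltnW kn) : n - k = 0).
rewrite /factor -map_drop -{1}(subnKC kn) iotaD drop_size_cat ?size_iota //.
rewrite add0n -[k in iota k _]addn0 iotaDl -map_comp.
apply/eq_map => j /=; congr x; lia.
Qed.

Lemma factorS x i n : factor x i n.+1 = x i :: factor x (i + 1) n.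
Proof.
rewrite /factor /= Z.add_0_r -[1]addn0 iotaDl -map_comp.
by congr cons; apply/eq_map => j /=; congr x; lia.
Qed.

Lemma factor_shift x i n : factor (shift x) i n = factor x (i + 1) n.
Proof. by rewrite /factor /shift; apply/eq_map => j /=; f_equal; ring. Qed.

Lemma inL_factor X x i n : X x -> inL X (factor x i n).
Proof. by move=> Xx; exists x; split=> //; exists i; rewrite size_factor. Qed.

Lemma inL_take X u k : inL X u -> inL X (take k u).
Proof.
case=> x [Xx [i <-]]; case: (leqP k (size u)) => ku.
  by rewrite take_factor //; apply: inL_factor.
by rewrite take_oversize ?size_factor 1?ltnW //; apply: inL_factor.
Qed.

Lemma inL_drop X u k : inL X u -> inL X (drop k u).
Proof. by case=> x [Xx [i <-]]; rewrite drop_factor; apply: inL_factor. Qed.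

End Factors.

Section BalancedWeights.
Variable A : finType.
Implicit Types (X : config A -> Prop) (x y : config A) (u v : seq A) (G : seq A -> Z).

Definition indicator v u : Z := if u == v then 1%Z else 0%Z.

Fixpoint birkhoff m G x (i : Z) n : Z :=
  if n is n'.+1 then (birkhoff m G x i n' + G (factor x (i + Z.of_nat n') m))%Z
  else 0%Z.

Definition balanced_weight X m G := exists C : Z, forall x y i j n, X x -> X y ->
  (Z.abs (birkhoff m G x i n - birkhoff m G y j n) <= C)%Z.

Lemma birkhoffS m G x i n :
  birkhoff m G x i n.+1 = (birkhoff m G x i n + G (factor x (i + Z.of_nat n) m))%Z.
Proof. by []. Qed.

Lemma birkhoff_addn m G x i n k :
  birkhoff m G x i (n + k) = (birkhoff m G x i n + birkhoff m G x (i + Z.of_nat n) k)%Z.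
Proof.
elim: k => [|k IH] /=; first by rewrite addn0; lia.
by rewrite addnS /= IH (_ : (i + Z.of_nat (n + k) = i + Z.of_nat n + Z.of_nat k)%Z); lia.
Qed.

Lemma birkhoffD m G1 G2 x i n :
  birkhoff m (fun u => G1 u + G2 u)%Z x i n = (birkhoff m G1 x i n + birkhoff m G2 x i n)%Z.
Proof. by elim: n => [|n /= ->] /=; lia. Qed.

Lemma birkhoffZ m k G x i n :
  birkhoff m (fun u => k * G u)%Z x i n = (k * birkhoff m G x i n)%Z.
Proof. by elim: n => [|n /= ->] /=; lia. Qed.

Lemma birkhoff_shift m G x i n :
  birkhoff m G (shift x) i n = birkhoff m G x (i + 1) n.
Proof.
elim: n => [|n /= ->] //; rewrite factor_shift.
by rewrite (_ : (i + Z.of_nat n + 1 = i + 1 + Z.of_nat n)%Z) //; ring.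
Qed.

Lemma eq_birkhoff_local m G x y i n :
  (forall k, (i <= k < i + Z.of_nat n + Z.of_nat m)%Z -> x k = y k) ->
  birkhoff m G x i n = birkhoff m G y i n.
Proof.
elim: n => [|n IH] exy //=.
rewrite IH => [|k kn]; last by apply: exy; lia.
by rewrite (@eq_factor _ x y) // => k kn; apply: exy; lia.
Qed.

Lemma eq_birkhoff_in X m G1 G2 x i n : X x ->
  (forall u, inL X u -> size u = m -> G1 u = G2 u) ->
  birkhoff m G1 x i n = birkhoff m G2 x i n.
Proof.
move=> Xx eG; elim: n => [|n /= ->] //.
by rewrite eG ?size_factor //; apply: inL_factor.
Qed.

Lemma count_birkhoff m v x i (P : pred nat) n :
  (forall k, k < n -> P k = (factor x (i + Z.of_nat k) m == v)) ->
  Z.of_nat (count P (iota 0 n)) = birkhoff m (indicator v) x i n.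
Proof.
elim: n => [|n IH] eP //.
rewrite -addn1 iotaD count_cat birkhoff_addn /= addn0 Nat2Z.inj_add IH; last first.
  by move=> k kn; apply: eP; apply: ltn_trans kn _.
by rewrite eP // /indicator Z.add_0_r; case: (_ == v) => /=; lia.
Qed.

Lemma occ_birkhoff v x i N : size v <= N ->
  Z.of_nat (occ (factor x i N) v) = birkhoff (size v) (indicator v) x i (N - size v).+1.
Proof.
move=> vN; rewrite /occ size_factor; apply: count_birkhoff => k kN.
by rewrite drop_factor take_factor //; lia.
Qed.

Lemma occ_oversize v w : size w < size v -> occ w v = 0.
Proof.
move=> wv; rewrite /occ (_ : size w - size v = 0) /=; last lia.
rewrite drop0 take_oversize 1?ltnW //.
by case: eqP => // ewv; move: wv; rewrite ewv ltnn.
Qed.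

Lemma foldr_indicator1 G b (r : seq A) : uniq r ->
  foldr (fun t acc => G [:: t] * indicator [:: t] [:: b] + acc)%Z 0%Z r =
  if b \in r then G [:: b] else 0%Z.
Proof.
elim: r => [|t r IH] //= /andP[tr ur]; rewrite IH // in_cons /indicator.
case: (eqVneq b t) => [->|bt]; first by rewrite !eqxx (negPf tr) /=; lia.
by case: eqP => [[ebt] | _] /=; [rewrite ebt eqxx in bt | lia].
Qed.

Lemma balanced_weight_eq_in X m G1 G2 :
  (forall u, inL X u -> size u = m -> G1 u = G2 u) ->
  balanced_weight X m G1 -> balanced_weight X m G2.
Proof.
move=> eG [C HC]; exists C => x y i j n Xx Xy.
by rewrite -(eq_birkhoff_in _ _ Xx eG) -(eq_birkhoff_in _ _ Xy eG); apply: HC.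
Qed.

Lemma balanced_weight0 X m : balanced_weight X m (fun _ => 0%Z).
Proof.
exists 0%Z => x y i j n _ _.
have S0 z k : birkhoff m (fun _ => 0%Z) z k n = 0%Z by elim: n => [|n /= ->].
by rewrite !S0.
Qed.

Lemma balanced_weightD X m G1 G2 : balanced_weight X m G1 -> balanced_weight X m G2 ->
  balanced_weight X m (fun u => G1 u + G2 u)%Z.
Proof.
move=> [C1 H1] [C2 H2]; exists (C1 + C2)%Z => x y i j n Xx Xy.
by rewrite !birkhoffD; have := H1 x y i j n Xx Xy; have := H2 x y i j n Xx Xy; lia.
Qed.

Lemma balanced_weightZ X m k G : balanced_weight X m G ->
  balanced_weight X m (fun u => k * G u)%Z.
Proof.
move=> [C HC]; exists (Z.abs k * C)%Z => x y i j n Xx Xy.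
rewrite !birkhoffZ -Z.mul_sub_distr_l Z.abs_mul.
by apply: Z.mul_le_mono_nonneg_l; [lia | apply: HC].
Qed.

Lemma balanced_weight_sum X m (I : Type) (r : seq I) (F : I -> seq A -> Z) :
  (forall t, balanced_weight X m (F t)) ->
  balanced_weight X m (fun u => foldr (fun t acc => F t u + acc) 0 r)%Z.
Proof.
move=> bF; elim: r => [|t r IH] /=; first exact: balanced_weight0.
exact: balanced_weightD.
Qed.

Lemma balanced_weight_take X m G :
  balanced_weight X m G -> balanced_weight X m.+1 (fun u => G (take m u)).
Proof.
move=> [C HC]; exists C => x y i j n Xx Xy.
have E z k : birkhoff m.+1 (fun u => G (take m u)) z k n = birkhoff m G z k n.
  by elim: n => [|n /= ->] //; rewrite take_factor.
by rewrite !E; apply: HC.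
Qed.

Lemma balanced_weight_behead X m G :
  balanced_weight X m G -> balanced_weight X m.+1 (fun u => G (behead u)).
Proof.
move=> [C HC]; exists C => x y i j n Xx Xy.
have E z k : birkhoff m.+1 (fun u => G (behead u)) z k n = birkhoff m G z (k + 1) n.
  elim: n => [|n IH] //; rewrite !birkhoffS IH factorS /=.
  by rewrite (_ : (k + Z.of_nat n + 1 = k + 1 + Z.of_nat n)%Z) //; ring.
by rewrite !E; apply: HC.
Qed.

Lemma balanced_weight_length0 X G : balanced_weight X 0 G.
Proof.
exists 0%Z => x y i j n _ _.
have E z k : birkhoff 0 G z k n = (Z.of_nat n * G [::])%Z.
  elim: n => [|n IH] //.
  by rewrite birkhoffS IH Nat2Z.inj_succ (_ : factor z _ 0 = [::]) //; lia.
by rewrite !E; lia.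
Qed.

Lemma balanced_on_weight X v :
  balanced_weight X (size v) (indicator v) -> balanced_on X v.
Proof.
move=> [C HC]; exists (Z.to_nat C) => w w' [x [Xx [i <-]]] [y [Xy [j <-]]].
rewrite !size_factor => <-.
case: (leqP (size v) (size w)) => vw; last by rewrite !occ_oversize ?size_factor.
have := HC x y i j (size w - size v).+1 Xx Xy.
by rewrite -(occ_birkhoff x i vw) -(occ_birkhoff y j vw); lia.
Qed.

Lemma balanced_on_notin X v : ~ inL X v -> balanced_on X v.
Proof.
move=> vL; apply/balanced_on_weight/(balanced_weight_eq_in _ (balanced_weight0 _ _)).
by move=> u uL _; rewrite /indicator; case: eqP => // euv; rewrite euv in uL.
Qed.

End BalancedWeights.

Section Chains.
Variable T : eqType.
Implicit Types (R : T -> T -> Prop) (u v p : T) (c : seq T).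

Fixpoint chain R u c v : Prop :=
  if c is p :: c' then R u p /\ chain R p c' v else u = v.

(* [graph_acyclic] with the non-isolated vertices as vertex set. *)
Definition acyclic R : Prop :=
  ~ exists (d : T) c, 3 <= size c /\ uniq c /\
      (forall p, p \in c -> exists q, R p q) /\
      forall i, i < size c -> R (nth d c i) (nth d c (i.+1 %% size c)).

Lemma acyclic_sub R R' : (forall p q, R p q -> R' p q) -> acyclic R' -> acyclic R.
Proof.
move=> sR acR' [d [c [c3 [uc [nc cR]]]]]; apply: acR'; exists d, c.
do 3 (split=> //); first by move=> p /nc [q /sR]; exists q.
by move=> i /cR /sR.
Qed.

Lemma chain_sub R R' u c v :
  (forall p q, R p q -> R' p q) -> chain R u c v -> chain R' u c v.
Proof. by move=> sR; elim: c u => [|p c IH] u //= [/sR ? /IH]. Qed.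

Lemma chain_rcons R u c v w : chain R u c v -> R v w -> chain R u (rcons c w) w.
Proof. by elim: c u => [|p c IH] u /= => [-> | [uRp /IH pc /pc]]. Qed.

Lemma chain_last R u c v : chain R u c v -> last u c = v.
Proof. by elim: c u => [|p c IH] u /= => [|[_ /IH]]. Qed.

Lemma chain_nth R u c v : chain R u c v ->
  forall d i, i < size c -> R (nth d (u :: c) i) (nth d c i).
Proof. by elim: c u => [|p c IH] u //= [uRp pc] d [|i] //= /IH; apply. Qed.

Lemma chain_drop R u c v : chain R u c v ->
  forall i p c', drop i (u :: c) = p :: c' -> chain R p c' v.
Proof.
elim: c u => [|q c IH] u uc [|i] p c' /=; [by case=> <- <- | by case: i | by case=> <- <- |].
by case: uc => _ /IH; apply.
Qed.

Lemma chain_uniq R u c v : chain R u c v -> exists c', chain R u c' v /\ uniq (u :: c').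
Proof.
elim: c u => [|p c IH] u /=; first by move=> ->; exists [::].
case=> uRp /IH [c' [pc' uc']].
case uc: (u \in p :: c'); last by exists (p :: c'); rewrite cons_uniq uc.
have ec : drop (index u (p :: c')) (p :: c') = u :: drop (index u (p :: c')).+1 (p :: c').
  by rewrite (drop_nth u) ?index_mem // nth_index.
exists (drop (index u (p :: c')).+1 (p :: c')); split; first exact: chain_drop pc' _ _ _ ec.
by rewrite -cons_uniq -ec drop_uniq.
Qed.

Lemma chain_cycle R u c v : chain R u c v -> uniq (u :: c) -> 2 <= size c -> R v u ->
  ~ acyclic R.
Proof.
move=> uc uniq_c c2 vRu; apply; exists u, (u :: c).
have cR i : i < size (u :: c) ->
    R (nth u (u :: c) i) (nth u (u :: c) (i.+1 %% size (u :: c))).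
  rewrite ltnS leq_eqVlt => /orP[/eqP->|ic]; last first.
    by rewrite modn_small ?ltnS //; apply: chain_nth uc u i ic.
  by rewrite -[size (u :: c)]/(size c).+1 modnn (nth_last u (u :: c)) /= (chain_last uc).
split; first by rewrite ltnS.
split=> //; split=> // p pc.
have := cR (index p (u :: c)); rewrite index_mem nth_index // => /(_ pc) pR.
by eexists; apply: pR.
Qed.

End Chains.

Section ForestPotentials.
Variable A : finType.
Implicit Types (E : seq (A * A)) (a b : A).

Definition bip_adj E (p q : bool * A) : Prop :=
  (p.1 = false /\ q.1 = true /\ (p.2, q.2) \in E) \/
  (p.1 = true /\ q.1 = false /\ (q.2, p.2) \in E).

Lemma bip_adj_sym E p q : bip_adj E p q -> bip_adj E q p.
Proof. by case=> [[? [? ?]]|[? [? ?]]]; [right | left]. Qed.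

Lemma bip_adj_cons e E p q : bip_adj E p q -> bip_adj (e :: E) p q.
Proof.
by case=> [[? [? pq]]|[? [? pq]]]; [left | right]; rewrite in_cons pq orbT.
Qed.

Lemma acyclic_cons_unreachable a b E :
  acyclic (bip_adj ((a, b) :: E)) -> (a, b) \notin E ->
  ~ exists c, chain (bip_adj E) (true, b) c (false, a).
Proof.
move=> acE abE [c /chain_uniq [c' [bc' uc']]].
have c2 : 2 <= size c'.
  case: c' bc' {uc'} => [|p [|q c']] //= [+ ep]; rewrite ep.
  by case=> [[//]|[_ [_ abE']]]; rewrite abE' in abE.
apply: chain_cycle (chain_sub (@bip_adj_cons (a, b) E) bc') uc' c2 _ acE.
by left; rewrite in_cons eqxx.
Qed.

Lemma forest_potential E : acyclic (bip_adj E) ->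
  forall c : A -> A -> Z, exists f g : A -> Z,
    forall a b, (a, b) \in E -> c a b = (f a + g b)%Z.
Proof.
elim: E => [|[a0 b0] E IH] acE c; first by exists (fun _ => 0%Z), (fun _ => 0%Z).
have [f [g cfg]] := IH (acyclic_sub (@bip_adj_cons (a0, b0) E) acE) c.
case abE: ((a0, b0) \in E).
  by exists f, g => a b; rewrite in_cons => /orP[/eqP[-> ->]|]; apply: cfg.
(* Shift the potentials by the defect [d] of the new edge on the component of
   [(true, b0)] in [E], which does not contain [(false, a0)]. *)
pose reach p := exists l, chain (bip_adj E) (true, b0) l p.
pose d := (c a0 b0 - f a0 - g b0)%Z.
pose dr p := if excluded_middle_informative (reach p) then d else 0%Z.
exists (fun a => f a - dr (false, a))%Z, (fun b => g b + dr (true, b))%Z.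
have r0 : dr (true, b0) = d.
  by rewrite /dr; case: excluded_middle_informative => // nr; case: nr; exists [::].
have r1 : dr (false, a0) = 0%Z.
  rewrite /dr; case: excluded_middle_informative => // ra0.
  by have := acyclic_cons_unreachable acE (negbT abE); case.
move=> a b; rewrite in_cons => /orP[/eqP[-> ->]|abE']; first by rewrite r0 r1 /d; lia.
have ab : bip_adj E (false, a) (true, b) by left.
have -> : dr (false, a) = dr (true, b).
  rewrite /dr; case: excluded_middle_informative => [[l la] | nra].
    case: excluded_middle_informative => // nrb; case: nrb.
    by exists (rcons l (true, b)); apply: chain_rcons la ab.
  case: excluded_middle_informative => // [[l lb]]; case: nra.
  by exists (rcons l (false, a)); apply: chain_rcons lb (bip_adj_sym ab).
by rewrite (cfg a b abE'); lia.
Qed.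

End ForestPotentials.

Section DendricWeights.
Variable A : finType.
Variable X : config A -> Prop.
Hypothesis dendricX : dendric X.
Implicit Types (a b : A) (w : seq A) (G : seq A -> Z).

Lemma inL_ext_l a w b : inL X (a :: rcons w b) -> inL X (a :: w).
Proof. by move/(inL_take (size w).+1); rewrite /= -cats1 take_size_cat. Qed.

Lemma inL_ext_r a w b : inL X (a :: rcons w b) -> inL X (rcons w b).
Proof. by move/(inL_drop 1); rewrite /= drop0. Qed.

Lemma inL_ext a w b : inL X (a :: rcons w b) -> inL X w.
Proof. by move/inL_ext_r/(inL_take (size w)); rewrite -cats1 take_size_cat. Qed.

Lemma dendric_weight_split G w : exists fg : (A -> Z) * (A -> Z),
  forall a b, inL X (a :: rcons w b) -> G (a :: rcons w b) = (fg.1 a + fg.2 b)%Z.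
Proof.
case: (classic (inL X w)) => wL; last first.
  by exists (fun _ => 0%Z, fun _ => 0%Z) => a b /inL_ext.
pose E := [seq ab <- [seq (a, b) | a <- enum A, b <- enum A] |
             if excluded_middle_informative (inL X (ab.1 :: rcons w ab.2)) then true else false].
have memE a b : (a, b) \in E <-> inL X (a :: rcons w b).
  by rewrite mem_filter /= allpairs_f ?mem_enum // andbT; case: excluded_middle_informative.
have acE : acyclic (bip_adj E).
  case: (dendricX wL) => _ acw [d [c [c3 [uc [nc cE]]]]]; apply: acw.
  have adjE p q : bip_adj E p q -> ext_adj X w p q.
    by case=> [[? [? /memE ?]]|[? [? /memE ?]]]; [left | right].
  exists d, c; do 3 (split=> //); last by move=> i /cE /adjE.
  move=> p /nc [q [[p1 [_ /memE pq]]|[p1 [_ /memE qp]]]]; rewrite /ext_vertex p1.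
    exact: inL_ext_l pq.
  exact: inL_ext_r qp.
have [f [g Gfg]] := forest_potential acE (fun a b => G (a :: rcons w b)).
by exists (f, g) => a b /memE /Gfg.
Qed.

Hypothesis balanced_letters : balanced_on_letters X.

Lemma balanced_weight_letter a : balanced_weight X 1 (indicator [:: a]).
Proof.
have [C HC] := balanced_letters a; exists (Z.of_nat C) => x y i j [|n] Xx Xy.
  by rewrite /=; lia.
have occ1 z k :
    birkhoff 1 (indicator [:: a]) z k n.+1 = Z.of_nat (occ (factor z k n.+1) [:: a]).
  by rewrite occ_birkhoff //= subn1.
have [] := HC _ _ (inL_factor i n.+1 Xx) (inL_factor j n.+1 Xy); first by rewrite !size_factor.
by rewrite !occ1; lia.
Qed.

Lemma balanced_weight_length1 G : balanced_weight X 1 G.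
Proof.
pose F t u := (G [:: t] * indicator [:: t] u)%Z.
apply: (balanced_weight_eq_in (G1 := fun u => foldr (fun t acc => F t u + acc) 0 (enum A))%Z);
  last by apply: balanced_weight_sum => t; apply/balanced_weightZ/balanced_weight_letter.
by move=> [|b [|]] // _ _; rewrite foldr_indicator1 ?enum_uniq // mem_enum.
Qed.

Lemma balanced_weight_all (a0 : A) m G : balanced_weight X m.+1 G.
Proof.
elim: m G => [|m IH] G; first exact: balanced_weight_length1.
have split_w w := constructive_indefinite_description _ (dendric_weight_split G w).
pose Gl u := (proj1_sig (split_w (behead u))).1 (head a0 u).
pose Gr u := (proj1_sig (split_w (take m u))).2 (nth a0 u m).
apply: (balanced_weight_eq_in (G1 := fun u => Gl (take m.+1 u) + Gr (behead u))%Z);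
  last by apply: balanced_weightD; [apply: balanced_weight_take | apply: balanced_weight_behead].
move=> [|a u] // + [su]; case/lastP: u su => [|w b] //.
rewrite size_rcons => -[sw] awbL.
rewrite (proj2_sig (split_w w) a b awbL) /Gl /Gr /=.
by rewrite -cats1 take_size_cat // nth_cat sw ltnn subnn.
Qed.

Lemma balanced_weight_indicator (a0 : A) v : balanced_weight X (size v) (indicator v).
Proof.
by case: (size v) => [|m]; [apply: balanced_weight_length0 | apply: balanced_weight_all].
Qed.

End DendricWeights.

Local Open Scope R_scope.

Section QuasiAdditive.
Variables (a : nat -> R) (C : R).
Hypothesis a0 : a 0%N = 0.
Hypothesis a_quasi_additive : forall n k, Rabs (a (n + k) - a n - a k) <= C.

Lemma quasi_additive_mul n k : Rabs (a (k * n) - INR k * a n) <= INR k * C.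
Proof.
elim: k => [|k IH]; first by rewrite mul0n a0 /= Rmult_0_l Rminus_0_r Rabs_R0; lra.
move: IH (a_quasi_additive (k * n) n); rewrite mulSn addnC S_INR !Rabs_le_between; lra.
Qed.

(* [(a n - C) / n <= (a k + C) / k] for all positive [n], [k]: [mu] is the
   supremum of the left-hand sides. *)
Lemma quasi_additive_linear : exists mu, forall n, Rabs (a n - INR n * mu) <= C.
Proof.
have ordered n k : (0 < n)%N -> (0 < k)%N -> (a n - C) / INR n <= (a k + C) / INR k.
  move=> /ltP n0 /ltP k0; have := lt_0_INR _ n0; have := lt_0_INR _ k0 => kp np.
  move: (quasi_additive_mul n k) (quasi_additive_mul k n); rewrite mulnC !Rabs_le_between.
  move=> ank akn; apply: (Rmult_le_reg_r (INR n * INR k)); first exact: Rmult_lt_0_compat.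
  rewrite (_ : (a n - C) / INR n * (INR n * INR k) = (a n - C) * INR k); last by field; lra.
  rewrite (_ : (a k + C) / INR k * (INR n * INR k) = (a k + C) * INR n); last by field; lra.
  lra.
pose E r := exists n, (0 < n)%N /\ r = (a n - C) / INR n.
have bE : bound E by exists ((a 1%N + C) / INR 1) => r [n [n0 ->]]; apply: ordered.
have [mu [ub lub]] := @completeness E bE (ex_intro _ _ (ex_intro _ 1%N (conj isT erefl))).
exists mu => -[|n].
  by move: (a_quasi_additive 0 0); rewrite addn0 a0 /= Rmult_0_l !Rminus_0_r.
have np : 0 < INR n.+1 by apply: lt_0_INR; apply/ltP.
have mu_lo : (a n.+1 - C) / INR n.+1 <= mu by apply: ub; exists n.+1.
have mu_hi : mu <= (a n.+1 + C) / INR n.+1.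
  by apply: lub => r [k [k0 ->]]; apply: ordered.
apply/Rabs_le_between; split.
  have := Rmult_le_compat_r _ _ _ (Rlt_le _ _ np) mu_hi.
  by rewrite /Rdiv Rmult_assoc Rinv_l; lra.
have := Rmult_le_compat_r _ _ _ (Rlt_le _ _ np) mu_lo.
by rewrite /Rdiv Rmult_assoc Rinv_l; lra.
Qed.

End QuasiAdditive.

Lemma balanced_weight_linear (A : finType) (X : config A -> Prop) m G :
  balanced_weight X m G -> (exists x, X x) ->
  exists mu K, forall x i n, X x -> Rabs (IZR (birkhoff m G x i n) - INR n * mu) <= K.
Proof.
move=> [C HC] [x0 Xx0].
pose a n := IZR (birkhoff m G x0 0 n).
have [|mu Hmu] := @quasi_additive_linear a (IZR C) erefl.
  move=> n k; rewrite /a birkhoff_addn -!minus_IZR Rabs_Zabs; apply: IZR_le.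
  by have := HC x0 x0 (0 + Z.of_nat n)%Z 0%Z k Xx0 Xx0; lia.
exists mu, (2 * IZR C) => x i n Xx.
have : Rabs (IZR (birkhoff m G x i n) - a n) <= IZR C.
  by rewrite /a -minus_IZR Rabs_Zabs; apply/IZR_le/HC.
by move: (Hmu n); rewrite !Rabs_le_between; lra.
Qed.

Section Discrepancy.
Variables (A : finType) (X : config A -> Prop) (v : seq A) (mu K : R).
Hypothesis bounded_discrepancy : forall x i n, X x ->
  Rabs (IZR (birkhoff (size v) (indicator v) x i n) - INR n * mu) <= K.

Lemma occ_discrepancy w : inL X w ->
  Rabs (INR (occ w v) - INR (size w) * mu) <= K + INR (size v).+1 * Rabs mu.
Proof.
case=> x [Xx [i <-]]; rewrite size_factor; set N := size w.
have K0 : 0 <= K.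
  by move: (bounded_discrepancy 0 0 Xx) => /=; rewrite Rmult_0_l Rminus_0_r Rabs_R0.
case: (leqP (size v) N) => vN; last first.
  rewrite occ_oversize ?size_factor // Rminus_0_l Rabs_Ropp Rabs_mult.
  rewrite Rabs_pos_eq; last exact: pos_INR.
  have := Rmult_le_compat_r _ _ _ (Rabs_pos mu) (le_INR _ _ (leP (ltnW vN))).
  by rewrite S_INR; have := Rabs_pos mu; lra.
have occN : INR (occ (factor x i N) v) =
    IZR (birkhoff (size v) (indicator v) x i (N - size v).+1).
  by rewrite INR_IZR_INZ occ_birkhoff.
have sizeN : INR (N - size v).+1 = INR N - INR (size v) + 1.
  by rewrite S_INR minus_INR //; apply/leP.
move: (bounded_discrepancy i (N - size v).+1 Xx); rewrite -occN sizeN.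
have := Rabs_triang (INR (occ (factor x i N) v) - (INR N - INR (size v) + 1) * mu)
  ((1 - INR (size v)) * mu).
rewrite (_ : _ + _ = INR (occ (factor x i N) v) - INR N * mu); last ring.
suff : Rabs ((1 - INR (size v)) * mu) <= INR (size v).+1 * Rabs mu by lra.
rewrite Rabs_mult S_INR; apply: Rmult_le_compat_r; first exact: Rabs_pos.
by apply/Rabs_le_between; have := pos_INR (size v); lra.
Qed.

Lemma frequency_of_bounded_discrepancy : is_frequency X v mu.
Proof.
move=> eps eps0; have [N0 N0eps] := INR_archimed eps (K + INR (size v).+1 * Rabs mu) eps0.
exists (maxn N0 1) => w wL; rewrite geq_max => /andP[/leP N0w /leP w1].
have wp : 0 < INR (size w) by apply: lt_0_INR.
apply: (Rmult_lt_reg_r (INR (size w))) => //.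
rewrite (_ : _ - mu = (INR (occ w v) - INR (size w) * mu) / INR (size w)); last by field; lra.
rewrite Rabs_div; last lra.
rewrite (Rabs_pos_eq _ (pos_INR _)) /Rdiv Rmult_assoc Rinv_l; last lra.
have := Rmult_le_compat_l _ _ _ (Rlt_le _ _ eps0) (le_INR _ _ N0w).
by have := occ_discrepancy wL; lra.
Qed.

Lemma bounded_remainder_of_discrepancy : bounded_remainder X v mu.
Proof.
exists K => x Xx n.
rewrite INR_IZR_INZ (@count_birkhoff _ (size v) v x 0%Z) //.
exact: bounded_discrepancy.
Qed.

End Discrepancy.

Definition is_sup (h : Z -> R) (L : R) :=
  (forall n, h n <= L) /\ (forall e, 0 < e -> exists n, L - e < h n).

Definition sup_of (h : Z -> R) : R := real (Lub_Rbar (fun r => exists n, r = h n)).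

Lemma sup_ofP h K : (forall n, h n <= K) -> is_sup h (sup_of h).
Proof.
move=> hK; rewrite /sup_of; case: (Lub_Rbar_correct (fun r => exists n, r = h n)).
case: (Lub_Rbar _) => [L | | ] ub lub /=.
- split=> [n | e e0]; first by apply: ub; exists n.
  apply: NNPP => noh; have : Rbar_le L (L - e); last by rewrite /=; lra.
  by apply: (lub (L - e)) => _ [n ->] /=; apply: Rnot_lt_le => hn; apply: noh; exists n.
- by exfalso; apply: (lub K) => _ [n ->]; apply: hK.
- by exfalso; apply: (ub (h 0%Z)); exists 0%Z.
Qed.

Lemma is_sup_unique h L1 L2 : is_sup h L1 -> is_sup h L2 -> L1 = L2.
Proof.
move=> [ub1 apx1] [ub2 apx2]; case: (Rtotal_order L1 L2) => [lt12 | [// | lt21]].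
  by have [n hn] := apx2 (L2 - L1) ltac:(lra); have := ub1 n; lra.
by have [n hn] := apx1 (L1 - L2) ltac:(lra); have := ub2 n; lra.
Qed.

Lemma sup_of_shift h K c : (forall n, h n <= K) ->
  sup_of (fun n => h (n + 1)%Z - c) = sup_of h - c.
Proof.
move=> hK; have [ub apx] := sup_ofP hK.
apply: (is_sup_unique (sup_ofP (K := K - c) _)) => [n | ]; first by have := hK (n + 1)%Z; lra.
split=> [n | e /apx [n hn]]; first by have := ub (n + 1)%Z; lra.
by exists (n - 1)%Z; rewrite Z.sub_add; lra.
Qed.

Section Semicontinuity.
Variables (A : finType) (X : config A -> Prop).
Implicit Types (f g : config A -> R) (x y : config A).

Definition lsc f := forall x, X x -> forall e, 0 < e ->
  exists N, forall y, X y -> agree N x y -> f x - e < f y.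

Lemma agree_le N N' x y : (N' <= N)%N -> agree N x y -> agree N' x y.
Proof. by move=> /leP N'N axy k kN; apply: axy; lia. Qed.

Lemma lscD f g : lsc f -> lsc g -> lsc (fun x => f x + g x).
Proof.
move=> lf lg x Xx e e0.
have [N1 fN1] := lf x Xx (e / 2) ltac:(lra); have [N2 gN2] := lg x Xx (e / 2) ltac:(lra).
exists (maxn N1 N2) => y Xy axy.
have := fN1 y Xy (agree_le (leq_maxl N1 N2) axy).
by have := gN2 y Xy (agree_le (leq_maxr N1 N2) axy); lra.
Qed.

Lemma lsc_eq_in f g c : lsc f -> (forall x, X x -> g x = f x + c) -> lsc g.
Proof.
move=> lf gf x Xx e /(lf x Xx) [N fN]; exists N => y Xy axy.
by rewrite !gf //; have := fN y Xy axy; lra.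
Qed.

Lemma lsc_sup_of (h : config A -> Z -> R) K :
  (forall x n, X x -> h x n <= K) ->
  (forall n, exists N, forall x y, agree N x y -> h x n = h y n) ->
  lsc (fun x => sup_of (h x)).
Proof.
move=> hK hloc x Xx e e0.
have [_ /(_ e e0) [n hn]] := sup_ofP (hK x^~ Xx).
have [N hN] := hloc n; exists N => y Xy axy.
have [ub _] := sup_ofP (hK y^~ Xy).
by have := ub n; rewrite -(hN x y axy); lra.
Qed.

Lemma lsc_continuous f : lsc f -> lsc (fun x => - f x) ->
  forall x, X x -> forall e, 0 < e ->
  exists N, forall y, X y -> agree N x y -> Rabs (f y - f x) < e.
Proof.
move=> lf lnf x Xx e e0.
have [N1 fN1] := lf x Xx e e0; have [N2 nfN2] := lnf x Xx e e0.
exists (maxn N1 N2) => y Xy axy; apply: Rabs_def1.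
  by have := nfN2 y Xy (agree_le (leq_maxr N1 N2) axy); lra.
by have := fN1 y Xy (agree_le (leq_maxl N1 N2) axy); lra.
Qed.

Hypothesis minX : minimal_subshift X.

(* The points where [f] is at most [f x] form a closed invariant subset. *)
Lemma minimal_lsc_invariant_le f : lsc f -> (forall x, X x -> f (shift x) = f x) ->
  forall x y, X x -> X y -> f y <= f x.
Proof.
move=> lf finv x y Xx Xy; case: minX => [[closedX invX] [_ minimal]].
have [] // := minimal (fun z => X z /\ f z <= f x) _ _ _ y Xy.
- by move=> z [].
- split.
    move=> z near_z; have Xz : X z.
      by apply: closedX => N; have [w [[Xw _] azw]] := near_z N; exists w.
    split=> //; apply: Rnot_lt_le => fxz.
    have [N fN] := lf z Xz (f z - f x) ltac:(lra).
    by have [w [[Xw fw] azw]] := near_z N; have := fN w Xw azw; lra.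
  move=> z; split=> [[Xz fz] | [/(proj2 (invX z)) Xz fz]].
    by split; [apply/(proj1 (invX z)) | rewrite finv].
  by split=> //; rewrite -finv.
- by exists x; split=> //; lra.
Qed.

End Semicontinuity.

Lemma Rabs_sin_le t : Rabs (sin t) <= Rabs t.
Proof.
have sin_le u : 0 <= u -> Rabs (sin u) <= u.
  move=> u0; case: (Req_dec u 0) => [-> | un0]; first by rewrite sin_0 Rabs_R0; lra.
  apply/Rabs_le_between; have := sin_lt_x u ltac:(lra) => sin_lt; split; last lra.
  case: (Rle_lt_dec 1 u) => u1; first by have := SIN_bound u; lra.
  have : 0 <= sin u by apply: sin_ge_0; have := PI2_1; lra.
  lra.
case: (Rle_lt_dec 0 t) => t0; first by rewrite (Rabs_pos_eq t) //; apply: sin_le.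
by rewrite -Rabs_Ropp -sin_neg (Rabs_left t) //; apply: sin_le; lra.
Qed.

Lemma one_sub_cos_le u : 1 - cos u <= u ^ 2 / 2.
Proof.
have := cos_2a_sin (u / 2); rewrite (_ : 2 * (u / 2) = u); last field.
move=> ->; have : sin (u / 2) ^ 2 <= (u / 2) ^ 2.
  rewrite -(pow2_abs (sin _)) -(pow2_abs (u / 2)).
  by apply: pow_incr; split; [apply: Rabs_pos | apply: Rabs_sin_le].
lra.
Qed.

Lemma e2ipiD s t : e2ipi (s + t) = Cmult (e2ipi s) (e2ipi t).
Proof.
rewrite /e2ipi /Cmult /= Rmult_plus_distr_l cos_plus sin_plus.
by f_equal; ring.
Qed.

Lemma e2ipi_sub1 t : e2ipi (t - 1) = e2ipi t.
Proof.
rewrite /e2ipi (_ : 2 * PI * t = 2 * PI * (t - 1) + 2 * INR 1 * PI); last by rewrite /=; ring.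
by rewrite cos_period sin_period.
Qed.

Lemma e2ipi_neq0 t : e2ipi t <> 0%C.
Proof.
by rewrite /e2ipi => -[c0 s0]; have := sin2_cos2 (2 * PI * t); rewrite c0 s0 /Rsqr; lra.
Qed.

(* [|e^{ia} - e^{ib}|^2 = 2 - 2 cos (a - b) <= (a - b)^2]. *)
Lemma e2ipi_lipschitz s t : Cmod (Cminus (e2ipi s) (e2ipi t)) <= 2 * PI * Rabs (s - t).
Proof.
rewrite /Cmod /Cminus /e2ipi /Cplus /Copp /=.
set a := 2 * PI * s; set b := 2 * PI * t.
have -> : 2 * PI * Rabs (s - t) = Rabs (a - b).
  rewrite /a /b -Rmult_minus_distr_l Rabs_mult (Rabs_pos_eq (2 * PI)) //.
  by have := PI_RGT_0; lra.
rewrite -sqrt_Rsqr_abs; apply: sqrt_le_1_alt.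
have -> : (cos a + - cos b) ^ 2 + (sin a + - sin b) ^ 2 = 2 - 2 * cos (a - b).
  by rewrite cos_minus; have := sin2_cos2 a; have := sin2_cos2 b; rewrite /Rsqr; nra.
by have := one_sub_cos_le (a - b); rewrite /Rsqr; lra.
Qed.

Section Eigenvalue.
Variables (A : finType) (X : config A -> Prop) (v : seq A) (mu K : R).
Hypothesis minX : minimal_subshift X.
Hypothesis bounded_discrepancy : forall x i n, X x ->
  Rabs (IZR (birkhoff (size v) (indicator v) x i n) - INR n * mu) <= K.
Implicit Types (x y : config A) (a b n : Z).

Definition discrepancy x a b :=
  IZR (birkhoff (size v) (indicator v) x a (Z.to_nat (b - a))) - IZR (b - a) * mu.

Definition cocycle x n := if (0 <=? n)%Z then discrepancy x 0 n else - discrepancy x n 0.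

Lemma discrepancy_split x a b c : (a <= b <= c)%Z ->
  discrepancy x a c = discrepancy x a b + discrepancy x b c.
Proof.
move=> abc; rewrite /discrepancy.
rewrite (_ : Z.to_nat (c - a) = Z.to_nat (b - a) + Z.to_nat (c - b))%N; last lia.
rewrite birkhoff_addn plus_IZR Z2Nat.id; last lia.
rewrite (_ : (a + (b - a) = b)%Z); last ring.
by rewrite (_ : (c - a = (b - a) + (c - b))%Z) ?plus_IZR; [ring | ring].
Qed.

Lemma discrepancy_shift x a b : discrepancy (shift x) a b = discrepancy x (a + 1) (b + 1).
Proof. by rewrite /discrepancy birkhoff_shift (_ : (b + 1 - (a + 1) = b - a)%Z) //; ring. Qed.

Lemma cocycle_shift x n : cocycle (shift x) n = cocycle x (n + 1) - cocycle x 1.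
Proof.
rewrite /cocycle !discrepancy_shift Z.add_0_l (_ : (0 <=? 1)%Z = true) //.
case: (Z.leb_spec 0 n) => n0.
  rewrite (proj2 (Z.leb_le 0 (n + 1))); last lia.
  by rewrite (@discrepancy_split x 0 1 (n + 1)); [ring | lia].
case: (Z.leb_spec 0 (n + 1)) => n1.
  by rewrite (_ : (n + 1 = 0)%Z) /discrepancy /=; [ring | lia].
by rewrite (@discrepancy_split x (n + 1) 0 1); [ring | lia].
Qed.

Lemma cocycle1 x : cocycle x 1 = IZR (indicator v (factor x 0 (size v))) - mu.
Proof. by rewrite /cocycle /discrepancy /=; ring. Qed.

Lemma cocycle_bound x n : X x -> Rabs (cocycle x n) <= K.
Proof.
move=> Xx; rewrite /cocycle; case: (Z.leb_spec 0 n) => n0; rewrite ?Rabs_Ropp /discrepancy.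
  by rewrite Z.sub_0_r -[in IZR n](Z2Nat.id n) // -INR_IZR_INZ; apply: bounded_discrepancy.
rewrite -[in IZR (0 - n)](Z2Nat.id (0 - n)) -?INR_IZR_INZ; last lia.
exact: bounded_discrepancy.
Qed.

Lemma cocycle_local n : exists N, forall x y, agree N x y -> cocycle x n = cocycle y n.
Proof.
exists (Z.to_nat (Z.abs n + Z.of_nat (size v))) => x y axy.
by rewrite /cocycle /discrepancy !(@eq_birkhoff_local _ _ _ x y) // => k kn; apply: axy; lia.
Qed.

Definition cocycle_sup x := sup_of (cocycle x).
Definition cocycle_negsup x := sup_of (fun n => - cocycle x n).

Lemma cocycle_sup_shift x : X x -> cocycle_sup (shift x) = cocycle_sup x - cocycle x 1.
Proof.
move=> Xx; rewrite /cocycle_sup -(sup_of_shift (K := K)) => [|n].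
  by congr sup_of; apply: functional_extensionality => n; apply: cocycle_shift.
by have /Rabs_le_between := cocycle_bound n Xx; lra.
Qed.

Lemma cocycle_negsup_shift x : X x ->
  cocycle_negsup (shift x) = cocycle_negsup x + cocycle x 1.
Proof.
move=> Xx; rewrite (_ : _ + _ = cocycle_negsup x - - cocycle x 1); last ring.
rewrite /cocycle_negsup -(sup_of_shift (K := K)) => [|n].
  by congr sup_of; apply: functional_extensionality => n; rewrite cocycle_shift; ring.
by have /Rabs_le_between := cocycle_bound n Xx; lra.
Qed.

Lemma lsc_cocycle_sup : lsc X cocycle_sup.
Proof.
apply: (lsc_sup_of (K := K)) => [x n Xx | n]; last exact: cocycle_local.
by have /Rabs_le_between := cocycle_bound n Xx; lra.
Qed.

Lemma lsc_cocycle_negsup : lsc X cocycle_negsup.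
Proof.
apply: (lsc_sup_of (K := K)) => [x n Xx | n].
  by have /Rabs_le_between := cocycle_bound n Xx; lra.
by have [N cN] := cocycle_local n; exists N => x y /cN ->.
Qed.

(* The oscillation [sup - inf] of the cocycle is lower semicontinuous and
   shift invariant, hence constant by minimality; so [cocycle_sup] is also
   upper semicontinuous. *)
Lemma cocycle_sup_continuous x : X x -> forall e, 0 < e -> exists N, forall y, X y ->
  agree N x y -> Rabs (cocycle_sup y - cocycle_sup x) < e.
Proof.
move=> Xx; pose osc y := cocycle_sup y + cocycle_negsup y.
have lsc_osc : lsc X osc by apply: lscD; [apply: lsc_cocycle_sup | apply: lsc_cocycle_negsup].
have osc_shift y : X y -> osc (shift y) = osc y.
  by move=> Xy; rewrite /osc cocycle_sup_shift // cocycle_negsup_shift //; ring.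
have osc_const y : X y -> osc y = osc x.
  by move=> Xy; apply: Rle_antisym; apply: (minimal_lsc_invariant_le minX lsc_osc).
apply: (lsc_continuous lsc_cocycle_sup _ Xx).
apply: (lsc_eq_in (c := - osc x) lsc_cocycle_negsup) => y Xy.
by rewrite -(osc_const y Xy) /osc; ring.
Qed.

Lemma additive_eigenvalue_of_discrepancy : additive_eigenvalue X mu.
Proof.
exists (fun x => e2ipi (cocycle_sup x)); split; [|split].
- move=> x Xx eps eps0; have pi2 : 0 < 2 * PI by have := PI_RGT_0; lra.
  have [N supN] := cocycle_sup_continuous Xx (Rdiv_lt_0_compat _ _ eps0 pi2).
  exists N => y Xy axy; apply: Rle_lt_trans (e2ipi_lipschitz _ _) _.
  have := Rmult_lt_compat_l _ _ _ pi2 (supN y Xy axy).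
  by rewrite Rmult_div_assoc Rmult_div_r //; lra.
- by case: minX => _ [[x Xx] _]; exists x; split=> //; apply: e2ipi_neq0.
- move=> x Xx; rewrite cocycle_sup_shift // cocycle1 -e2ipiD /indicator.
  case: eqP => _; last by congr e2ipi; ring.
  by rewrite -[RHS]e2ipi_sub1; congr e2ipi; ring.
Qed.

End Eigenvalue.

Theorem theorem1p1 (A : finType) (X : config A -> Prop)
  (HX : minimal_subshift X) (HD : dendric X) :
  (balanced_on_letters X <-> balanced_on_factors X) /\
  (balanced_on_letters X ->
     forall v : seq A, inL X v ->
       exists mu : R, is_frequency X v mu /\ additive_eigenvalue X mu /\
                      bounded_remainder X v mu).
Proof.
have [x0 Xx0] : exists x, X x by case: HX => _ [].
have weights : balanced_on_letters X -> forall v, balanced_weight X (size v) (indicator v).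
  by move=> HL v; apply: (balanced_weight_indicator HD HL (x0 0%Z)).
split.
  split=> [HL v _ | HF a]; first exact/balanced_on_weight/weights.
  by case: (classic (inL X [:: a])) => aL; [apply: HF | apply: balanced_on_notin].
move=> HL v _.
have [mu [K discK]] := balanced_weight_linear (weights HL v) (ex_intro _ x0 Xx0).
exists mu; split; first exact: frequency_of_bounded_discrepancy discK.
split; first exact: additive_eigenvalue_of_discrepancy HX discK.
exact: bounded_remainder_of_discrepancy discK.
Qed.
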